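(* Let $p$ and $q$ be distinct odd primes and $x,y$ nonzero integers with $x^p-y^q=1$. Let $G=\mathrm{Gal}(\mathbb{Q}(\zeta_p)/\mathbb{Q})$ and $$X=\{\theta\in\mathbb{Z}[G]\;:\;\exists\,\alpha\in\mathbb{Q}(\zeta_p)^* \text{ with } (x-\zeta_p)^\theta=\alpha^q\}.$$ Then $X$ is an additive subgroup of $\mathbb{Z}[G]$, for each $\theta\in X$ the element $\alpha\in\mathbb{Q}(\zeta_p)^*$ with $(x-\zeta_p)^\theta=\alpha^q$ is unique, and the map $X\to\mathbb{Q}(\zeta_p)^*$, $\theta\mapsto\alpha$, is an injective group homomorphism.
   Context: $\zeta_p=e^{2i\pi/p}$. The group ring $\mathbb{Z}[G]$ acts exponentially on $\mathbb{Q}(\zeta_p)^*$: for $\theta=\sum_{\tau\in G}n_\tau\tau$ and $z\in\mathbb{Q}(\zeta_p)^*$, $z^\theta=\prod_{\tau\in G}\tau(z)^{n_\tau}$. *)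

From HB Require Import structures.
From mathcomp Require Import all_boot all_order all_algebra all_fingroup all_solvable all_field.
Set Implicit Arguments. Unset Strict Implicit. Unset Printing Implicit Defensive.
Import GRing.Theory Num.Theory.
Local Open Scope ring_scope.

(* The number field L plays the role of Q(zeta_p); its Galois group over Q is
   gal_of (fullv : {vspace L}) (all automorphisms of L fixing the base field rat). *)
Definition galQ (L : splittingFieldType rat) := gal_of (fullv : {vspace L}).

(* The group ring Z[G], with G = Gal(L/Q): integer-valued functions on G. *)
Definition ZG (L : splittingFieldType rat) := {ffun galQ L -> int}.

Definition zgact (L : splittingFieldType rat) (theta : ZG L) (w : L) : L :=
  \prod_(tau : galQ L) (tau w) ^ (theta tau).

From HB Require Import structures.
From mathcomp Require Import all_boot all_order all_algebra all_fingroup all_solvable all_field.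
From mathcomp Require Import zify.
From Stdlib Require Import ClassicalEpsilon.
Set Implicit Arguments.
Unset Strict Implicit.
Unset Printing Implicit Defensive.
Import GRing.Theory Num.Theory.
Local Open Scope ring_scope.

(* The map theta |-> (x - zeta)^theta is a morphism from (Z[G], +) to L^*, so X is the
   preimage of the subgroup of q-th powers.  A nontrivial q-th root of unity in
   L = Q(zeta) would give a primitive pq-th root of unity, of degree (p - 1)(q - 1) > [L : Q];
   hence q-th roots in L are unique and theta |-> alpha is a morphism.  It is injective
   because the conjugates tau(x - zeta) = x - zeta^(k tau) are multiplicatively independent:
   by elementary size estimates (x^p - 1)/(x - 1) = y^q/(x - 1) has a prime factor l != p,
   so x is a primitive p-th root of unity modulo l.  A multiplicative relation among the
   conjugates is a polynomial identity at zeta, hence modulo 'Phi_p, hence at every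
   primitive p-th root r of F_l; choosing r with r^(k s) = x kills exactly the factor of s,
   which forces its exponent to be 0. *)

Lemma prime_prim_root (R : nzRingType) n (z : R) :
  prime n -> z ^+ n = 1 -> z != 1 -> n.-primitive_root z.
Proof.
move=> n_prime zn1 z_neq1; have [m prim_z m_dvd_n] := prim_order_exists (prime_gt0 n_prime) zn1.
have [m1 | m_neq1] := eqVneq m 1%N; last by rewrite -(prime_nt_dvdP n_prime m_neq1 m_dvd_n).
by move: (prim_expr_order prim_z); rewrite m1 expr1 => z1; rewrite z1 eqxx in z_neq1.
Qed.

Lemma prim_rootM (R : comNzRingType) m n (u v : R) : coprime m n ->
  m.-primitive_root u -> n.-primitive_root v -> (m * n).-primitive_root (u * v).
Proof.
move=> co_mn prim_u prim_v; have u_m := prim_expr_order prim_u.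
have v_n := prim_expr_order prim_v.
have mn_gt0 : (0 < m * n)%N by rewrite muln_gt0 (prim_order_gt0 prim_u) (prim_order_gt0 prim_v).
have uv_mn : (u * v) ^+ (m * n) = 1.
  by rewrite exprMn exprM u_m expr1n mulnC exprM v_n expr1n mulr1.
have [d prim_uv d_dvd_mn] := prim_order_exists mn_gt0 uv_mn.
have uv_d := prim_expr_order prim_uv.
have u_dn : u ^+ (d * n) = 1.
  have := congr1 (fun a : R => a ^+ n) uv_d; rewrite /= -exprM exprMn expr1n.
  by rewrite (mulnC d) [v ^+ _]exprM v_n expr1n mulr1 mulnC.
have v_dm : v ^+ (d * m) = 1.
  have := congr1 (fun a : R => a ^+ m) uv_d; rewrite /= -exprM exprMn expr1n.
  by rewrite (mulnC d) [u ^+ _]exprM u_m expr1n mul1r mulnC.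
suff mn_dvd_d : (m * n %| d)%N by have /eqP-> : (m * n)%N == d by rewrite eqn_dvd mn_dvd_d.
rewrite Gauss_dvd // -(Gauss_dvdl _ co_mn) (prim_order_dvd prim_u) u_dn eqxx /=.
by rewrite coprime_sym in co_mn; rewrite -(Gauss_dvdl _ co_mn) (prim_order_dvd prim_v) v_dm.
Qed.

Lemma prim_root_exp_inv (F : fieldType) n k (z : F) : coprime k n ->
  n.-primitive_root z -> exists2 r, n.-primitive_root r & r ^+ k = z.
Proof.
move=> co_kn prim_z.
have prim_zk : n.-primitive_root (z ^+ k) by rewrite (prim_root_exp_coprime _ prim_z).
have [j zE] := prim_rootP prim_zk (prim_expr_order prim_z).
exists (z ^+ j); last by rewrite -exprM mulnC exprM -zE.
rewrite (prim_root_exp_coprime _ prim_z).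
have := prim_z; rewrite {1}zE -exprM (prim_root_exp_coprime _ prim_z).
by rewrite coprimeMl => /andP[].
Qed.

Lemma unity_root_Cyclotomic (F : fieldType) n (z : F) : (0 < n)%N ->
  (z ^+ n == 1) = has (fun d => root (map_poly intr 'Phi_d) z) (divisors n).
Proof.
move=> n_gt0; have := congr1 (map_poly (intr : int -> F)) (prod_Cyclotomic n_gt0).
rewrite rmorph_prod rmorphB rmorph1 /= map_polyXn => prodE.
have -> : (z ^+ n == 1) = root ('X^n - 1) z by rewrite rootE !hornerE subr_eq0.
rewrite -prodE -[root _ _]negbK -(big_map _ xpredT idfun) root_bigmul.
by rewrite all_map -has_predC; apply: eq_has => d; rewrite /= negbK.
Qed.

Lemma Cyclotomic_prim_root (F : fieldType) n (z : F) :
  n.-primitive_root z -> root (map_poly intr 'Phi_n) z.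
Proof.
move=> prim_z; have n_gt0 := prim_order_gt0 prim_z.
have /hasP[d] : has (fun d => root (map_poly intr 'Phi_d) z) (divisors n).
  by rewrite -unity_root_Cyclotomic // prim_expr_order.
rewrite -dvdn_divisors // => d_dvd_n rz; have d_gt0 := dvdn_gt0 n_gt0 d_dvd_n.
have zd1 : z ^+ d == 1.
  by rewrite unity_root_Cyclotomic //; apply/hasP; exists d; rewrite -?dvdn_divisors.
suff -> : n = d by [].
by apply/eqP; rewrite eqn_dvd d_dvd_n (prim_order_dvd prim_z) zd1.
Qed.

Lemma Cyclotomic_dvdp (L : fieldExtType rat) n (w : L) (P : {poly rat}) :
  n.-primitive_root w -> root (map_poly (in_alg L) P) w ->
  map_poly intr 'Phi_n %| P.
Proof.
move=> prim_w rPw; have n_gt0 := prim_order_gt0 prim_w.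
set Phi := map_poly (intr : int -> rat) 'Phi_n.
have Phi_neq0 : Phi != 0 by apply/monic_neq0/monic_map/Cyclotomic_monic.
have int_ratr (R : nzRingType) (f : {rmorphism rat -> R}) :
    map_poly f Phi = map_poly intr 'Phi_n.
  by rewrite -map_poly_comp; apply: eq_map_poly => a /=; rewrite rmorph_int.
pose g := gcdp P Phi; have g_neq0 : g != 0 by rewrite gcdp_eq0 negb_and Phi_neq0 orbT.
have rgw : root (map_poly (in_alg L) g) w.
  by rewrite gcdp_map root_gcd rPw int_ratr Cyclotomic_prim_root.
(* Irreducibility of 'Phi_n is only known over algC (minCpoly_cyclotomic), so we move a
   common root of P and 'Phi_n there. *)
have [z rgz] : exists z, root (map_poly (ratr : rat -> algC) g) z.
  apply/closed_rootP; rewrite size_map_poly.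
  have := root_size_gt1 _ rgw; rewrite map_poly_eq0 size_map_poly => /(_ g_neq0).
  by case: (size g) => [|[]].
have [z0 prim_z0] := C_prim_root_exists n_gt0.
have Phi_minC : minCpoly z = map_poly ratr Phi.
  have prim_z : n.-primitive_root z.
    rewrite -(root_cyclotomic prim_z0) -(Cintr_Cyclotomic prim_z0) -(int_ratr _ ratr).
    by apply: root_dvdp rgz; rewrite dvdp_map dvdp_gcdr.
  by rewrite (minCpoly_cyclotomic prim_z) -(Cintr_Cyclotomic prim_z) int_ratr.
have [pz [Dpz _] dv_pz] := minCpolyP z.
have -> : Phi = pz.
  apply: (@map_inj_poly _ _ (ratr : rat -> algC)); [exact: fmorph_inj | exact: rmorph0 |].
  by rewrite -Phi_minC Dpz.
by apply: dvdp_trans (dvdp_gcdl P Phi); rewrite -dv_pz.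
Qed.

Lemma root_int_poly_prim_root (L : fieldExtType rat) (F : fieldType) n
    (zeta : L) (r : F) (P : {poly int}) :
  n.-primitive_root zeta -> n.-primitive_root r ->
  root (map_poly intr P) zeta -> root (map_poly intr P) r.
Proof.
move=> prim_zeta prim_r rPzeta.
have Phi_monic := Cyclotomic_monic n.
have PE := Pdiv.RingMonic.rdivp_eq Phi_monic P.
set Pq := Pdiv.CommonRing.rdivp _ _ in PE; set Pr := Pdiv.CommonRing.rmodp _ _ in PE.
suff Pr0 : Pr = 0 by rewrite PE Pr0 addr0 rmorphM rootM Cyclotomic_prim_root ?orbT.
have Pr_small : (size Pr < size 'Phi_n)%N by rewrite Pdiv.Ring.ltn_rmodp monic_neq0.
have rPr : root (map_poly (in_alg L) (map_poly (intr : int -> rat) Pr)) zeta.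
  rewrite -map_poly_comp (eq_map_poly (rmorph_int (in_alg L))).
  have -> : Pr = P - Pq * 'Phi_n by rewrite PE addrAC subrr add0r.
  rewrite rmorphB rmorphM rootE !hornerE (rootP rPzeta).
  by rewrite (rootP (Cyclotomic_prim_root prim_zeta)) mulr0 subrr.
apply/eqP; apply: contraTT (Cyclotomic_dvdp prim_zeta rPr) => Pr_neq0.
have {}Pr_neq0 : map_poly (intr : int -> rat) Pr != 0.
  by rewrite -size_poly_eq0 size_map_inj_poly ?size_poly_eq0 //; exact: intr_inj.
apply/negP => /(dvdp_leq Pr_neq0); rewrite leqNgt.
by rewrite !size_map_inj_poly ?Pr_small //; exact: intr_inj.
Qed.

Lemma adjoin_degree_prim_root (L : fieldExtType rat) n (w : L) :
  n.-primitive_root w -> adjoin_degree 1 w = totient n.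
Proof.
move=> prim_w; apply/eqP; rewrite eqn_leq; apply/andP; split.
  have Phi_over : map_poly (intr : int -> L) 'Phi_n \is a polyOver 1%VS.
    apply/polyOver1P; exists (map_poly intr 'Phi_n); rewrite -map_poly_comp.
    by apply: eq_map_poly => a; symmetry; exact: (rmorph_int (in_alg L)).
  have Phi_neq0 : map_poly (intr : int -> L) 'Phi_n != 0.
    by apply/monic_neq0/monic_map/Cyclotomic_monic.
  have := dvdp_leq Phi_neq0 (minPoly_dvdp Phi_over (Cyclotomic_prim_root prim_w)).
  rewrite size_minPoly size_map_poly_id0 ?size_Cyclotomic //.
  by rewrite (monicP (Cyclotomic_monic n)) oner_eq0.
have [Q DQ] := polyOver1P (minPolyOver 1 w).
have Q_neq0 : Q != 0 by rewrite -(map_poly_eq0 (in_alg L)) -DQ monic_neq0 ?monic_minPoly.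
have := dvdp_leq Q_neq0 (Cyclotomic_dvdp prim_w _).
rewrite -DQ root_minPoly size_map_inj_poly ?size_Cyclotomic //; last exact: intr_inj.
by rewrite -(size_map_poly (in_alg L)) -DQ size_minPoly; apply.
Qed.

Lemma intr_unity_root (L : fieldExtType rat) n (x : int) :
  (x%:~R : L) ^+ n = 1 -> x ^+ n = 1.
Proof.
move=> xn1; apply: (intr_inj : injective (intr : int -> rat)); apply: (fmorph_inj (in_alg L)).
by rewrite !(rmorph_int (in_alg L)) rmorphXn /= xn1 mulr1z.
Qed.

Lemma totient_le_dim (L : fieldExtType rat) n (w : L) :
  n.-primitive_root w -> (totient n <= \dim (fullv : {vspace L}))%N.
Proof.
move/adjoin_degree_prim_root <-; rewrite adjoin_degreeE dimv1 divn1.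
by rewrite dimvS ?subvf.
Qed.

Section CyclotomicField.

Variables (L : fieldExtType rat) (n : nat) (zeta : L).
Hypotheses (prim_zeta : n.-primitive_root zeta) (genL : <<1; zeta>>%VS = fullv).

Lemma dim_cyclotomic_field : \dim (fullv : {vspace L}) = totient n.
Proof. by rewrite -genL dim_Fadjoin dimv1 muln1 (adjoin_degree_prim_root prim_zeta). Qed.

Lemma cyclotomic_unity_root_eq1 q (a : L) :
  prime q -> coprime n q -> (2 < q)%N -> a ^+ q = 1 -> a = 1.
Proof.
move=> q_prime co_nq q_gt2 aq1; apply/eqP/negPn/negP => a_neq1.
have := totient_le_dim (prim_rootM co_nq prim_zeta (prime_prim_root q_prime aq1 a_neq1)).
rewrite dim_cyclotomic_field totient_coprime // (totient_prime q_prime).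
have := totient_gt0 n; rewrite (prim_order_gt0 prim_zeta); nia.
Qed.

Lemma cyclotomic_expr_inj q : prime q -> coprime n q -> (2 < q)%N ->
  injective (fun a : L => a ^+ q).
Proof.
move=> q_prime co_nq q_gt2 a b /=; have [-> | b_neq0] := eqVneq b 0 => eq_ab.
  by move: eq_ab; rewrite expr0n eqn0Ngt prime_gt0 // => /eqP; rewrite expf_eq0 => /andP[_ /eqP].
apply: (divIf b_neq0); rewrite divff //.
apply: cyclotomic_unity_root_eq1 q_prime co_nq q_gt2 _.
by rewrite exprMn exprVn eq_ab divff ?expf_neq0.
Qed.

End CyclotomicField.

Lemma odd_prime_gt2 p : prime p -> odd p -> (2 < p)%N.
Proof.
move=> p_prime p_odd; rewrite ltn_neqAle prime_gt1 // andbT.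
by apply: contraTneq p_odd => <-.
Qed.

Lemma geom_sum_binomial (R : idomainType) p (u : R) : u != 0 ->
  \sum_(i < p) (u + 1) ^+ i = \sum_(j < p) u ^+ j *+ 'C(p, j.+1).
Proof.
move=> u_neq0; apply: (mulfI u_neq0).
have -> : u * \sum_(i < p) (u + 1) ^+ i = (u + 1) ^+ p - 1 by rewrite subrX1 addrK.
rewrite exprD1n big_ord_recl /= expr0 bin0.
by rewrite addrC addKr mulr_sumr; apply: eq_bigr => j _; rewrite exprS mulrnAr.
Qed.

Lemma geom_sum_modp2 p (x : int) : prime p -> (2 < p)%N ->
  (p%:Z %| \sum_(i < p) x ^+ i)%Z -> (p%:Z ^+ 2 %| \sum_(i < p) x ^+ i - p%:Z)%Z.
Proof.
move=> p_prime p_gt2; have [-> | x_neq1] := eqVneq x 1.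
  move=> _; rewrite (eq_bigr (fun=> 1)) => [|i _]; last by rewrite expr1n.
  by rewrite sumr_const card_ord natz subrr.
set u := x - 1; rewrite -[x](subrK 1) geom_sum_binomial ?subr_eq0 // -/u.
have p_dvd_bin j : (0 < j < p)%N -> (p%:Z %| 'C(p, j)%:Z)%Z.
  by move=> j_bounds; rewrite dvdzE !absz_nat prime_dvd_bin.
case: p p_prime p_gt2 p_dvd_bin => // p p_prime p_gt2 p_dvd_bin p_dvd_sum.
have p_dvd_u : (p.+1%:Z %| u)%Z.
  have p_dvd_low : (p.+1%:Z %| \sum_(j < p) u ^+ j *+ 'C(p.+1, j.+1))%Z.
    apply: rpred_sum => j _; rewrite -mulr_natr natz.
    by apply/dvdz_mull/p_dvd_bin; rewrite /= ltnS.
  move: p_dvd_sum; rewrite big_ord_recr /= binn mulr1n => /rpredB/(_ p_dvd_low).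
  by rewrite addrAC subrr add0r !dvdzE abszX absz_nat Euclid_dvdX // => /andP[].
have p2_dvd_pow k : (1 < k)%N -> (p.+1%:Z ^+ 2 %| u ^+ k)%Z.
  by move=> k_gt1; rewrite -(subnKC k_gt1) exprD dvdz_mulr // dvdz_exp2r.
rewrite big_ord_recl /= expr0 bin1 natz [_ + _ - _]addrC addKr.
apply: rpred_sum => j _; have [j0 | j_gt0] := posnP j.
  rewrite /bump j0 /= expr1 -mulr_natr natz expr2; apply: dvdz_mul => //.
  exact: p_dvd_bin.
by rewrite -mulr_natr dvdz_mulr // p2_dvd_pow // ltnS.
Qed.

Lemma lin_lt_pow a n : (2 <= a)%N -> (3 <= n)%N -> (6 <= a + n)%N ->
  (n * a.+1 + 2 <= a ^ n)%N.
Proof.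
move=> a_ge2; elim: n => // n IHn n_ge3 an_ge6; rewrite expnS.
have [n_le2 | n_gt2] := leqP n 2.
  have -> : n = 2%N by lia.
  by rewrite (expnS a 1) expn1; nia.
have [an_lt6 | /(IHn n_gt2)] := ltnP (a + n) 6; last by nia.
by have [-> ->] : a = 2%N /\ n = 3%N by lia.
Qed.

Lemma expn_neq_2_9 b k : (2 < k)%N -> ((b ^ k != 2) && (b ^ k != 9))%N.
Proof.
move=> k_gt2; have [b_le1 | b_gt1] := leqP b 1.
  have [-> | ->] : b = 0%N \/ b = 1%N by lia.
    by rewrite exp0n //; lia.
  by rewrite exp1n.
have [-> | b_gt2] := eqVneq b 2%N.
  by rewrite -(subnKC k_gt2) expnD; apply/andP; split; apply/negP => /eqP; lia.
have : (b ^ 3 <= b ^ k)%N by rewrite leq_pexp2l; lia.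
rewrite !expnS expn0; lia.
Qed.

Lemma catalan_geom_sum_gt p q (x y : int) : odd p -> (2 < p)%N -> (2 < q)%N ->
  x != 0 -> y != 0 -> y ^+ q = x ^+ p - 1 -> (p < `|(\sum_(i < p) x ^+ i)%R|)%N.
Proof.
move=> p_odd p_gt2 q_gt2 x_neq0 y_neq0 yqE; set N := (\sum_(i < p) x ^+ i)%R.
have [yq2 yq9] := andP (expn_neq_2_9 `|y| q_gt2); rewrite -abszX yqE in yq2 yq9.
have x_neq1 : x != 1.
  by apply: contraNneq (expf_neq0 q y_neq0) => x1; rewrite yqE x1 expr1n subrr.
have [x_le1 | x_ge2] := leqP `|x| 1.
  have x_m1 : x = -1 by lia.
  by move: yq2; rewrite x_m1 -signr_odd p_odd expr1.
(* If |N| <= p, then |x|^p <= |x - 1| |N| + 1 <= (|x| + 1) p + 1, against lin_lt_pow. *)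
have [sum_ge6 | sum_lt6] := leqP 6 (`|x| + p).
  rewrite ltnNge; apply/negP => N_le_p.
  have := lin_lt_pow x_ge2 p_gt2 sum_ge6.
  have : (`|x ^+ p| <= `|y ^+ q| + 1)%N by rewrite yqE; lia.
  rewrite yqE subrX1 abszM abszX -/N.
  have : (`|x - 1| <= `|x| + 1)%N by lia.
  nia.
have p3 : p = 3%N by lia.
have [x2 | x_m2] : x = 2 \/ x = -2 by lia.
  by rewrite /N x2 p3 !big_ord_recr big_ord0.
by move: yq9; rewrite x_m2 p3.
Qed.

Lemma catalan_prime_factor p q (x y : int) : prime p -> odd p -> (2 < q)%N ->
  x != 0 -> y != 0 -> x ^+ p - y ^+ q = 1 ->
  exists l, [/\ prime l, l != p & (l%:Z %| \sum_(i < p) x ^+ i)%Z].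
Proof.
move=> p_prime p_odd q_gt2 x_neq0 y_neq0 catalan; set N := \sum_(i < p) x ^+ i.
have p_gt2 := odd_prime_gt2 p_prime p_odd.
have yqE : y ^+ q = x ^+ p - 1 by rewrite -catalan opprB addrC subrK.
have N_gt_p := catalan_geom_sum_gt p_odd p_gt2 q_gt2 x_neq0 y_neq0 yqE.
have [m co_mp NE] := pfactor_coprime p_prime (leq_ltn_trans (leq0n p) N_gt_p).
have [m_gt1 | m_le1] := ltnP 1 m.
  exists (pdiv m); split; [exact: pdiv_prime | |].
    by apply: contraTneq co_mp => <-; rewrite prime_coprime ?pdiv_prime // pdiv_dvd.
  by rewrite dvdzE absz_nat NE dvdn_mulr // pdiv_dvd.
have m1 : m = 1%N by move: N_gt_p m_le1; rewrite NE; case: m {co_mp NE} => [|[|]].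
rewrite m1 mul1n in NE; set k := logn p _ in NE.
have k_gt1 : (1 < k)%N.
  by move: N_gt_p; rewrite NE -{1}(expn1 p) ltn_exp2l // prime_gt1.
have p2_dvd_N : (p%:Z ^+ 2 %| N)%Z by rewrite dvdzE abszX absz_nat NE dvdn_exp2l.
have p_dvd_N : (p%:Z %| N)%Z by apply: dvdz_trans p2_dvd_N; rewrite expr2 dvdz_mulr.
exfalso; have := rpredB p2_dvd_N (geom_sum_modp2 p_prime p_gt2 p_dvd_N).
rewrite opprB addrC subrK dvdzE abszX absz_nat => /(dvdn_leq (prime_gt0 p_prime)).
by have := prime_gt1 p_prime; nia.
Qed.

Lemma geom_sum_prim_root_Fp l p (x : int) : prime l -> prime p -> l != p ->
  (l%:Z %| \sum_(i < p) x ^+ i)%Z -> p.-primitive_root (x%:~R : 'F_l).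
Proof.
move=> l_prime p_prime l_neq_p l_dvd_sum; have charFl := pchar_Fp l_prime.
have sum0 : \sum_(i < p) (x%:~R : 'F_l) ^+ i = 0.
  have -> : \sum_(i < p) (x%:~R : 'F_l) ^+ i = (\sum_(i < p) x ^+ i)%:~R.
    by rewrite rmorph_sum; apply: eq_bigr => i _; rewrite rmorphXn.
  by apply/eqP; rewrite -(dvdz_pcharf charFl).
apply: prime_prim_root => //; first by apply/eqP; rewrite -subr_eq0 subrX1 sum0 mulr0.
apply: contraNneq l_neq_p => x1; move: sum0; rewrite x1.
under eq_bigr do rewrite expr1n.
by rewrite sumr_const card_ord => /eqP; rewrite -(dvdn_pcharf charFl) dvdn_prime2.
Qed.

Definition pos_part (n : int) : nat := if n is Posz m then m else 0.
Definition neg_part (n : int) : nat := if n is Negz m then m.+1 else 0.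

Lemma exprz_neg_part (R : unitRingType) (a : R) n : a \is a GRing.unit ->
  a ^ n * a ^+ neg_part n = a ^+ pos_part n.
Proof. by case: n => m a_unit; rewrite /= ?mulr1 // NegzE -exprnN mulVr ?unitrX. Qed.

Lemma pos_neg_part_eq0 n : (0 < pos_part n)%N = (0 < neg_part n)%N -> n = 0.
Proof. by case: n => [[]|]. Qed.

Section GroupRingAction.

Variables (L : splittingFieldType rat) (w : L).

Lemma zgact0 : zgact 0 w = 1.
Proof. by rewrite /zgact big1 // => tau _; rewrite ffunE expr0z. Qed.

Lemma zgactD t1 t2 : w != 0 -> zgact (t1 + t2) w = zgact t1 w * zgact t2 w.
Proof.
move=> w_neq0; rewrite /zgact -big_split; apply: eq_bigr => tau _.
by rewrite ffunE expfzDr ?fmorph_eq0.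
Qed.

Lemma zgactN t : zgact (- t) w = (zgact t w)^-1.
Proof. by rewrite /zgact -prodfV; apply: eq_bigr => tau _; rewrite ffunE invr_expz. Qed.

End GroupRingAction.

Section GaloisConjugates.

Variables (L : splittingFieldType rat) (p : nat) (zeta : L) (x : int).
Hypotheses (prim_zeta : p.-primitive_root zeta) (genL : <<1; zeta>>%VS = fullv).
Variable k : galQ L -> nat.
Hypothesis kE : forall tau : galQ L, tau zeta = zeta ^+ k tau.

Lemma eq_gal_generator (tau sigma : galQ L) : tau zeta = sigma zeta -> tau = sigma.
Proof.
move=> eq_zeta; apply/eqP/gal_eqP => v _.
have /Fadjoin_polyP[P /polyOver1P[Q ->] ->] : v \in <<1; zeta>>%VS by rewrite genL memvf.
rewrite -!horner_map /= eq_zeta; congr (_.[_]); rewrite -!map_poly_comp.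
by apply: eq_map_poly => a /=; rewrite !rmorph_alg.
Qed.

Lemma gal_exponent_coprime (tau : galQ L) : coprime (k tau) p.
Proof. by rewrite -(prim_root_exp_coprime _ prim_zeta) -kE fmorph_primitive_root. Qed.

Lemma gal_exponent_inj (tau sigma : galQ L) : k tau = k sigma %[mod p] -> tau = sigma.
Proof.
move=> eq_k; apply: eq_gal_generator.
by rewrite !kE -(prim_expr_mod prim_zeta) eq_k (prim_expr_mod prim_zeta).
Qed.

Definition conj_poly (e : galQ L -> nat) : {poly int} :=
  \prod_(tau : galQ L) (x%:P - 'X^(k tau)) ^+ e tau.

Lemma horner_conj_poly (R : comNzRingType) e (z : R) :
  (map_poly intr (conj_poly e)).[z] = \prod_(tau : galQ L) (x%:~R - z ^+ k tau) ^+ e tau.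
Proof.
rewrite rmorph_prod horner_prod; apply: eq_bigr => tau _.
by rewrite rmorphXn /= horner_exp rmorphB /= map_polyC map_polyXn !hornerE.
Qed.

Lemma horner_conj_poly_zeta e :
  (map_poly intr (conj_poly e)).[zeta] = \prod_(tau : galQ L) tau (x%:~R - zeta) ^+ e tau.
Proof.
rewrite horner_conj_poly; apply: eq_bigr => tau _.
by rewrite rmorphB rmorph_int; congr ((_ - _) ^+ _); exact/esym/kE.
Qed.

Lemma horner_conj_poly_eq0 (F : fieldType) (r : F) (s0 : galQ L) e :
  p.-primitive_root r -> r ^+ k s0 = x%:~R ->
  ((map_poly intr (conj_poly e)).[r] == 0) = (0 < e s0)%N.
Proof.
move=> prim_r rkE; have p_gt0 := prim_order_gt0 prim_r.
have factor_eq0 (tau : galQ L) : (x%:~R - r ^+ k tau == 0) = (tau == s0).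
  rewrite subr_eq0 -rkE (eq_prim_root_expr prim_r) eq_sym.
  by apply/eqP/eqP => [/gal_exponent_inj | ->].
rewrite horner_conj_poly; apply/prodf_eq0/idP => [[tau _] | e_gt0].
  by rewrite expf_eq0 factor_eq0 => /andP[e_gt0 /eqP <-].
by exists s0; rewrite // expf_eq0 factor_eq0 eqxx andbT.
Qed.

Lemma zgact_x_sub_zeta_eq1 (t : ZG L) : prime p ->
  (exists l, [/\ prime l, l != p & (l%:Z %| \sum_(i < p) x ^+ i)%Z]) ->
  x%:~R != zeta -> zgact t (x%:~R - zeta) = 1 -> t = 0.
Proof.
move=> p_prime [l [l_prime l_neq_p l_dvd]] x_neq_zeta tw1; apply/ffunP => s0; rewrite ffunE.
have prim_x := geom_sum_prim_root_Fp l_prime p_prime l_neq_p l_dvd.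
have [r prim_r rkE] := prim_root_exp_inv (gal_exponent_coprime s0) prim_x.
(* Reducing modulo l, x - r ^+ k s0 is the only vanishing conjugate factor. *)
pose Pt := conj_poly (fun tau => pos_part (t tau)) - conj_poly (fun tau => neg_part (t tau)).
have root_zeta : root (map_poly intr Pt) zeta.
  rewrite rmorphB rootE hornerD hornerN !horner_conj_poly_zeta subr_eq0.
  rewrite -[X in _ == X]mul1r -[in X in _ == X * _]tw1 /zgact -big_split /=.
  by apply/eqP/eq_bigr => tau _; rewrite exprz_neg_part // unitfE fmorph_eq0 subr_eq0.
have := root_int_poly_prim_root prim_zeta prim_r root_zeta.
rewrite rmorphB rootE hornerD hornerN subr_eq0 => /eqP eq_r.
apply: pos_neg_part_eq0.
rewrite -(horner_conj_poly_eq0 (fun tau => pos_part (t tau)) prim_r rkE) eq_r.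
by rewrite (horner_conj_poly_eq0 (fun tau => neg_part (t tau)) prim_r rkE).
Qed.

End GaloisConjugates.

Lemma zgact_x_sub_prim_root_eq1 (L : splittingFieldType rat) p (zeta : L) (x : int)
    (t : ZG L) :
  prime p -> p.-primitive_root zeta -> <<1; zeta>>%VS = fullv ->
  (exists l, [/\ prime l, l != p & (l%:Z %| \sum_(i < p) x ^+ i)%Z]) ->
  x%:~R != zeta -> zgact t (x%:~R - zeta) = 1 -> t = 0.
Proof.
move=> p_prime prim_zeta genL.
have [k kE] : exists k : galQ L -> nat, forall tau : galQ L, tau zeta = zeta ^+ k tau.
  exists (fun tau : galQ L => s2val (aut_prim_rootP tau prim_zeta)) => tau.
  by case: aut_prim_rootP.
exact: (@zgact_x_sub_zeta_eq1 L p zeta x prim_zeta genL k kE t p_prime).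
Qed.

Theorem mainTheorem10 (p q : nat) (x y : int)
  (L : splittingFieldType rat) (zeta : L) :
  prime p -> prime q -> odd p -> odd q -> p != q ->
  x != 0 -> y != 0 -> x ^+ p - y ^+ q = 1 ->
  p.-primitive_root zeta -> <<1; zeta>>%VS = fullv ->
  let X := fun theta : ZG L =>
    exists alpha : L, alpha != 0 /\ zgact theta (x%:~R - zeta) = alpha ^+ q in
  [/\ X 0, (forall t1 t2, X t1 -> X t2 -> X (t1 - t2)),
      (forall theta (a b : L), a != 0 -> b != 0 ->
         zgact theta (x%:~R - zeta) = a ^+ q ->
         zgact theta (x%:~R - zeta) = b ^+ q -> a = b) &
      exists f : ZG L -> L,
        [/\ (forall theta, X theta ->
               f theta != 0 /\ zgact theta (x%:~R - zeta) = f theta ^+ q),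
            (forall t1 t2, X t1 -> X t2 -> f (t1 + t2) = f t1 * f t2) &
            (forall t1 t2, X t1 -> X t2 -> f t1 = f t2 -> t1 = t2)]].
Proof.
move=> p_prime q_prime p_odd q_odd p_neq_q x_neq0 y_neq0 catalan prim_zeta genL X.
have q_gt2 := odd_prime_gt2 q_prime q_odd.
have co_pq : coprime p q by rewrite prime_coprime // dvdn_prime2.
have root_inj := cyclotomic_expr_inj prim_zeta genL q_prime co_pq q_gt2.
have x_neq_zeta : x%:~R != zeta.
  apply: contra_neq (expf_neq0 q y_neq0) => xE.
  have /intr_unity_root xp1 : (x%:~R : L) ^+ p = 1 by rewrite xE (prim_expr_order prim_zeta).
  by rewrite -(subKr (x ^+ p) (y ^+ q)) catalan xp1 subrr.
set w := x%:~R - zeta; have w_neq0 : w != 0 by rewrite subr_eq0.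
have X0 : X 0 by exists 1; rewrite oner_neq0 zgact0 expr1n.
have XB t1 t2 : X t1 -> X t2 -> X (t1 - t2).
  move=> [a [a_neq0 Ea]] [b [b_neq0 Eb]]; exists (a / b).
  by rewrite mulf_neq0 ?invr_neq0 // zgactD // zgactN Ea Eb exprMn exprVn.
have XD t1 t2 : X t1 -> X t2 -> X (t1 + t2).
  by move=> X1 X2; rewrite -[t2]opprK -[- t2]sub0r; apply/XB/XB.
pose f t := epsilon (inhabits 0) (fun a : L => a != 0 /\ zgact t w = a ^+ q).
have fP t : X t -> f t != 0 /\ zgact t w = f t ^+ q := epsilon_spec (inhabits 0) _.
split=> // [t a b _ _ -> /root_inj // | ].
exists f; split=> // t1 t2 X1 X2; have [f1_neq0 E1] := fP _ X1; have [_ E2] := fP _ X2.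
  have [_ E12] := fP _ (XD _ _ X1 X2).
  by apply: root_inj; rewrite /= exprMn -E1 -E2 -zgactD.
move=> eq_f; apply/eqP; rewrite -subr_eq0; apply/eqP.
have ell := catalan_prime_factor p_prime p_odd q_gt2 x_neq0 y_neq0 catalan.
apply: zgact_x_sub_prim_root_eq1 p_prime prim_zeta genL ell x_neq_zeta _.
by rewrite (zgactD _ _ w_neq0) zgactN E1 E2 -eq_f divff // expf_neq0.
Qed.
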